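(* Let $E_3^*$ be the greedy exponential-progression-free set defined in the context. Then the exponential density of $\mathbb{N}\setminus E_3^*$ exists and equals $1/4$, i.e. $$\lim_{n\to\infty}\frac{\log\big(\#\{a\in \mathbb{N}\setminus E_3^* : a\le n\}\big)}{\log n} = \frac14.$$
   Context: An exponential progression is a triple $x, x^n, x^{n^2}$ with natural numbers $x, n > 1$. $E_3^*$ is constructed greedily: $1\in E_3^*$, and for $k=2,3,\dots$ in increasing order, $k$ is put into $E_3^*$ unless there are natural numbers $x,n>1$ with $x, x^n\in E_3^*$ and $k=x^{n^2}$. The upper exponential density of $A\subseteq\mathbb{N}$ is $\overline{e}(A)=\limsup_{n\to\infty}\frac{1}{\log n}\log\big(\#\{a\in A: a\le n\}\big)$; the lower exponential density uses $\liminf$, and the exponential density $e(A)$ is the common value when they agree. *)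

From mathcomp Require Import all_boot.
From Stdlib Require Import Reals.

Set Implicit Arguments.
Unset Strict Implicit.
Unset Printing Implicit Defensive.

(* Given s = [E(0); ...; E(k-1)] (membership bits of 0..k-1), decide whether
   k = size s is put into E_3^*:  1 is in E_3^*, 0 is not (N = {1,2,...}),
   and k >= 2 is in unless k = x^(n^2) with x, n > 1 and x, x^n already in.
   (The bounds x < k, n < k lose nothing: x^(n^2) = k with x,n >= 2 forces
   x < k and n < k, and then x^n < k too.) *)
Definition E3step (s : seq bool) : bool :=
  let k := size s in
  (k == 1) ||
  ((2 <= k) &&
   ~~ [exists x : 'I_k, [exists n : 'I_k,
        [&& 1 < x, 1 < n, x ^ (n ^ 2) == k,
            nth false s x & nth false s (x ^ n)]]]).

Definition E3list (n : nat) : seq bool :=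
  iter n (fun s => rcons s (E3step s)) [::].

Definition E3 (k : nat) : bool := nth false (E3list k.+1) k.

Definition compl_count (n : nat) : nat :=
  count (fun a => ~~ E3 a) (iota 1 n).

From Stdlib Require Import Reals Lra.
From mathcomp Require Import all_boot zify.

(* Every k >= 2 outside E3 has the form x^(n^2) with n >= 2, i.e. is a perfect
   m-th power with m >= 4; there are at most N^(1/4) log_2 N of those up to N.
   Conversely, for x = 4j+2 the 2-adic valuations of x and x^2 are 1 and 2,
   which are neither 0 nor multiples of a square n^2 >= 4, so x and x^2 lie in
   E3 and therefore x^4 = x^(2^2) does not: this gives about N^(1/4)/4
   excluded numbers up to N.  Hence the logarithm of the number of excluded
   a <= N stays within O(sqrt(log N)) of (log N)/4. *)

Lemma size_E3list n : size (E3list n) = n.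
Proof. by elim: n => //= n IH; rewrite size_rcons IH. Qed.

Lemma nth_E3list n k : k < n -> nth false (E3list n) k = E3 k.
Proof.
elim: n => // n IH; rewrite ltnS leq_eqVlt => /predU1P[-> // | ltkn].
by rewrite /= nth_rcons size_E3list ltkn IH.
Qed.

Lemma Nat_powE m n : Nat.pow m n = m ^ n.
Proof. by elim: n => //= n ->; rewrite expnS. Qed.

Lemma exp_sq_gt {x n} : 1 < x -> 1 < n ->
  [/\ x < x ^ (n ^ 2), n < x ^ (n ^ 2) & x ^ n < x ^ (n ^ 2)].
Proof.
move=> x1 n1; have n_lt_sq : n < n ^ 2 by rewrite -{1}(expn1 n) ltn_exp2l.
have xn_lt : x ^ n < x ^ (n ^ 2) by rewrite ltn_exp2l.
split=> //; last exact: ltn_trans (ltn_expl n x1) xn_lt.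
by rewrite -{1}(expn1 x) ltn_exp2l //; apply: ltn_trans n_lt_sq.
Qed.

(* [E3step] is written with Peano's [Nat.pow]; this restates it with [expn]. *)
Lemma E3E k : E3 k =
  (k == 1) ||
  ((1 < k) && ~~ [exists x : 'I_k, [exists n : 'I_k,
     [&& 1 < x, 1 < n, x ^ (n ^ 2) == k,
         nth false (E3list k) x & nth false (E3list k) (x ^ n)]]]).
Proof.
rewrite {1}/E3 /E3list iterS -/(E3list k) nth_rcons size_E3list ltnn eqxx.
rewrite /E3step size_E3list; congr (_ || (_ && ~~ _)).
by apply: eq_existsb => x; apply: eq_existsb => n; rewrite !Nat_powE.
Qed.

Lemma notE3P {k} : 1 < k ->
  reflect (exists x n, [/\ 1 < x, 1 < n, x ^ (n ^ 2) = k, E3 x & E3 (x ^ n)])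
          (~~ E3 k).
Proof.
move=> k1; rewrite E3E gtn_eqF // k1 /= negbK.
apply: (iffP existsP) => [[x /existsP[n /and5P[x1 n1 /eqP xnk]]] |
                          [x [n [x1 n1 xnk Ex Exn]]]].
  have [ltxk _ ltxnk] := exp_sq_gt x1 n1; rewrite xnk in ltxk ltxnk.
  by rewrite !nth_E3list // => Ex Exn; exists x, n.
have [ltxk ltnk ltxnk] := exp_sq_gt x1 n1; rewrite xnk in ltxk ltnk ltxnk.
exists (Ordinal ltxk); apply/existsP; exists (Ordinal ltnk).
by rewrite /= x1 n1 xnk eqxx !nth_E3list ?Ex ?Exn.
Qed.

Lemma notE3_perfect_power k : 1 < k -> ~~ E3 k ->
  exists x m, [/\ 1 < x, 3 < m & x ^ m = k].
Proof.
move=> k1 /(notE3P k1)[x [n [x1 n1 xnk _ _]]]; exists x, (n ^ 2).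
by rewrite (@leq_exp2r 2 n 2).
Qed.

Lemma E3_logn p k : 0 < logn p k < 4 -> E3 k.
Proof.
move=> lognk; have k1 : 1 < k.
  move: lognk; rewrite logn_gt0 mem_primes => /andP[/and3P[pp k0 pk] _].
  exact: leq_trans (prime_gt1 pp) (dvdn_leq k0 pk).
apply/negP => /negP /(notE3P k1)[x [n [_ n1 xnk _ _]]].
have n2 : 3 < n ^ 2 by rewrite (@leq_exp2r 2 n 2).
move: lognk n2; rewrite -xnk lognX.
by case: (logn p x) => [|a]; rewrite ?muln0 // mulnS; lia.
Qed.

Lemma logn2_4j2 j : logn 2 (4 * j + 2) = 1.
Proof.
have -> : 4 * j + 2 = 2 * (2 * j).+1 by lia.
rewrite lognM // logn_prime // (logn_coprime (m := (2 * j).+1)) //.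
by rewrite coprime2n /= oddM.
Qed.

Lemma notE3_4j2_pow4 j : ~~ E3 ((4 * j + 2) ^ 4).
Proof.
have x1 : 1 < 4 * j + 2 by lia.
have [x_lt _ _] := exp_sq_gt x1 (isT : 1 < 2).
apply/(notE3P (ltn_trans x1 x_lt)).
exists (4 * j + 2), 2; split => //; apply: (@E3_logn 2).
  by rewrite logn2_4j2.
by rewrite lognX logn2_4j2.
Qed.

Lemma compl_count_le N r T : N < r.+1 ^ 4 -> N < 2 ^ T.+1 ->
  compl_count N <= r.+1 * T.+1.
Proof.
move=> Nr NT; rewrite /compl_count -size_filter.
rewrite -(size_iota 0 r.+1) -(size_iota 0 T.+1).
rewrite -(size_allpairs (fun x m => x ^ m)).
apply: uniq_leq_size; first exact/filter_uniq/iota_uniq.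
move=> a; rewrite mem_filter mem_iota add1n ltnS => /andP[Ea /andP[a0 aN]].
have a1 : 1 < a by case: a a0 Ea {aN} => [|[|]].
have [x [m [x1 m3 xma]]] := notE3_perfect_power _ a1 Ea; subst a.
apply/allpairsP; exists (x, m); rewrite !mem_iota /= !add0n; split=> //.
- rewrite -(@ltn_exp2r _ _ 4) //; apply: leq_ltn_trans Nr.
  by apply: leq_trans aN; rewrite leq_pexp2l // ltnW.
- rewrite -(@ltn_exp2l 2) //; apply: leq_ltn_trans NT.
  by apply: leq_trans aN; rewrite leq_exp2r // (leq_trans _ m3).
Qed.

Lemma compl_count_ge N r : r ^ 4 <= N -> r %/ 4 <= compl_count N.
Proof.
move=> rN; rewrite /compl_count -size_filter -(size_iota 0 (r %/ 4)).
rewrite -(size_map (fun j => (4 * j + 2) ^ 4)); apply: uniq_leq_size.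
  rewrite map_inj_uniq ?iota_uniq // => i j /(expIn (isT : 0 < 4)) /eqP.
  by rewrite eqn_add2r eqn_mul2l /= => /eqP.
move=> a /mapP[j]; rewrite mem_iota add0n => /andP[_ jr] ->.
have xr : 4 * j + 2 <= r by have := leq_divM r 4; lia.
rewrite mem_filter notE3_4j2_pow4 mem_iota expn_gt0 addn_gt0 orbT /=.
by rewrite add1n ltnS (leq_trans _ rN) // leq_exp2r.
Qed.

Lemma iroot_ex e N : 0 < e -> exists r, r ^ e <= N < r.+1 ^ e.
Proof.
move=> e0; elim: N => [|N [r /andP[rN Nr]]].
  by exists 0; rewrite exp0n // expn_gt0.
have [SNr | rSN] := ltnP N.+1 (r.+1 ^ e).
  by exists r; rewrite SNr (leq_trans rN).
by exists r.+1; rewrite rSN (leq_ltn_trans Nr) // ltn_exp2r.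
Qed.

Lemma compl_count_bounds N : 255 < N -> exists r T,
  [/\ 0 < r, r ^ 4 <= N, 2 ^ T <= N, compl_count N <= 2 * r * T.+1
    & N <= (8 * compl_count N) ^ 4].
Proof.
move=> N255; have [r /andP[rN Nr]] := @iroot_ex 4 N isT.
have r4 : 3 < r by rewrite -ltnS -(@ltn_exp2r _ _ 4) // (leq_ltn_trans N255 Nr).
have Nlog := @trunc_log_ltn 2 N isT.
have cge := compl_count_ge _ _ rN.
exists r, (trunc_log 2 N); split.
- exact: ltn_trans r4.
- exact: rN.
- by apply: trunc_logP; rewrite // (ltn_trans _ N255).
- apply: leq_trans (compl_count_le _ _ _ Nr Nlog) _.
  by apply: leq_mul; lia.
- apply: leq_trans (ltnW Nr) _; rewrite leq_exp2r //.
  by have := leq_divM r 4; lia.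
Qed.

Open Scope R_scope.

Lemma ln_le_sub1 x : 0 < x -> ln x <= x - 1.
Proof. by move=> x0; have := exp_ineq1_le (ln x); rewrite exp_ln //; lra. Qed.

Lemma ln_le_sqrt x : 0 < x -> ln x <= 2 * sqrt x.
Proof.
move=> x0; have s0 : 0 < sqrt x by apply: sqrt_lt_R0.
have -> : ln x = 2 * ln (sqrt x).
  by rewrite -{1}(sqrt_sqrt x) ?ln_mult //; lra.
by have := ln_le_sub1 _ s0; lra.
Qed.

Lemma INR_gt0 {n} : (0 < n)%N -> 0 < INR n.
Proof. by move=> /ltP; apply: lt_0_INR. Qed.

Lemma ln_le_ln x y : 0 < x -> x <= y -> ln x <= ln y.
Proof. by move=> x0 /Rle_lt_or_eq_dec[/(ln_increasing _ _ x0)|->]; lra. Qed.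

Lemma ln_INR_le m n : (0 < m)%N -> (m <= n)%N -> ln (INR m) <= ln (INR n).
Proof. by move=> m0 /leP /le_INR; apply: ln_le_ln; apply: INR_gt0. Qed.

Lemma ln_INR_mul m n : (0 < m)%N -> (0 < n)%N ->
  ln (INR (m * n)) = ln (INR m) + ln (INR n).
Proof. by move=> m0 n0; rewrite -multE mult_INR ln_mult //; apply: INR_gt0. Qed.

Lemma ln_INR_expn m k : (0 < m)%N -> ln (INR (m ^ k)) = INR k * ln (INR m).
Proof.
move=> m0; rewrite -ln_pow; last exact: INR_gt0.
by congr ln; elim: k => [|k IH] //; rewrite expnS -multE mult_INR IH.
Qed.

Lemma ln_compl_count_dev N : (255 < N)%N ->
  Rabs (ln (INR (compl_count N)) - 1 / 4 * ln (INR N)) <= 7 * sqrt (ln (INR N)).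
Proof.
move=> N255; have [r [T [r0 rN TN cle Nle]]] := compl_count_bounds _ N255.
set c := compl_count N in cle Nle *; set L := ln (INR N).
have c0 : (0 < c)%N.
  rewrite lt0n; apply/contraTneq: Nle => ->.
  by rewrite -ltnNge (ltn_trans _ N255).
have [INR2 INR4 INR8] : [/\ INR 2 = 2, INR 4 = 4 & INR 8 = 8].
  by rewrite !INR_IZR_INZ.
have ln2 : / 2 < ln 2 <= 1.
  by split; [exact: ln_lt_2 | have := ln_le_sub1 2; lra].
have L8 : 8 * ln 2 <= L.
  have := ln_INR_le (2 ^ 8) N isT N255.
  by rewrite ln_INR_expn // INR8 INR2.
have sqrtL : 1 <= sqrt L by rewrite -sqrt_1; apply: sqrt_le_1_alt; lra.
have lnL := ln_le_sqrt L ltac:(lra).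
have r4 : (0 < r ^ 4)%N by rewrite expn_gt0 r0.
have rL : 4 * ln (INR r) <= L.
  by have := ln_INR_le _ _ r4 rN; rewrite ln_INR_expn // INR4.
have TL : INR T * ln 2 <= L.
  have := ln_INR_le _ _ (expn_gt0 2 T) TN.
  by rewrite ln_INR_expn // INR2.
have lower : L <= 4 * (ln 8 + ln (INR c)).
  have := ln_INR_le _ _ (ltn_trans (isT : (0 < 255)%N) N255) Nle.
  rewrite ln_INR_expn ?muln_gt0 ?c0 // ln_INR_mul //.
  by rewrite INR4 INR8.
have upper : ln (INR c) <= ln 2 + ln (INR r) + ln (3 * L).
  have := ln_INR_le _ _ c0 cle; rewrite !ln_INR_mul ?muln_gt0 ?r0 //.
  rewrite INR2 S_INR.
  suff : ln (INR T + 1) <= ln (3 * L) by lra.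
  have := pos_INR T => T_ge0; apply: ln_le_ln; [lra | nra].
rewrite ln_mult in upper; [|lra|lra].
have ln3 := ln_le_sub1 3; have ln8 := ln_le_sub1 8.
by apply: Rabs_le; lra.
Qed.

Lemma Un_cv_div_sqrt_dev (a L : nat -> R) l c n0 :
  cv_infty L ->
  (forall n, (n0 <= n)%N -> Rabs (a n - l * L n) <= c * sqrt (L n)) ->
  Un_cv (fun n => a n / L n) l.
Proof.
move=> L_infty dev eps eps0.
have [N1 LN1] := L_infty (Rabs c / eps * (Rabs c / eps)).
exists (maxn n0 N1) => n /leP.
rewrite geq_max => /andP[/dev dev_n /leP /LN1 Ln].
have c_eps : 0 <= Rabs c / eps.
  by apply: Rmult_le_pos; [apply: Rabs_pos | left; apply: Rinv_0_lt_compat].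
have L0 : 0 < L n by nra.
have s0 := sqrt_pos (L n); have ss : sqrt (L n) * sqrt (L n) = L n.
  by apply: sqrt_sqrt; lra.
set s := sqrt (L n) in dev_n s0 ss *.
have s_gt : Rabs c / eps < s by nra.
have c_lt : c < eps * s.
  have c_eq : Rabs c = eps * (Rabs c / eps) by field; lra.
  have := Rmult_lt_compat_l eps _ _ eps0 s_gt; have := Rle_abs c; lra.
rewrite /R_dist -ss in dev_n *.
rewrite (_ : a n / (s * s) - l = (a n - l * (s * s)) * / (s * s)).
  rewrite Rabs_mult Rabs_inv (Rabs_pos_eq (s * s)); last nra.
  apply: (Rmult_lt_reg_r (s * s)); first nra.
  by rewrite Rmult_assoc Rinv_l; nra.
by field; nra.
Qed.

Lemma ln_INR_infty : cv_infty (fun n => ln (INR n)).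
Proof.
move=> M; have [N1 N1M] := INR_unbounded (exp M).
exists N1 => n /le_INR N1n; rewrite -[M]ln_exp.
apply: ln_increasing; [exact: exp_pos | lra].
Qed.

Theorem mainTheorem5 :
  Un_cv (fun n : nat => ln (INR (compl_count n)) / ln (INR n)) (1 / 4).
Proof.
apply: (Un_cv_div_sqrt_dev _ _ _ 7 256 ln_INR_infty).
exact: ln_compl_count_dev.
Qed.
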